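(* Let $F$ be an $L$-layer MLP as described in the context, trained with the cross-entropy loss $\mathcal{L}$ by gradient ascent with iterations $t$, and suppose that along this trajectory the logit gradient stays bounded away from zero, i.e. $\|\nabla_z\mathcal{L}(t)\|\ge c>0$ for some constant $c$ and all large $t$. Suppose the logits satisfy $\|z(t)\|\to\infty$. Then: (i) if there is a constant $C_1>0$ with $\|a_{L-1}(t)\|\le C_1$ for all large $t$, it follows that $\|W_L(t)\|\to\infty$; (ii) if there is no such bound on $\|a_{L-1}(t)\|$, there exists a subsequence of iterations $t_k$ such that $\|\nabla_{W_L}\mathcal{L}(t_k)\|\to\infty$.
   Context: An $L$-layer MLP $F$ with input $x$: $a_0=x$; for $1\le l\le L-1$, $h_l=W_la_{l-1}$ and $a_l=\sigma(h_l)$, where $W_l\in\mathbb{R}^{d_l\times d_{l-1}}$ (biases are absorbed into the weights by appending a constant coordinate $1$ to $a_{l-1}$) and $\sigma$ is an activation with $|\sigma'(s)|\le C$ for all $s\in\mathbb{R}$; the logits are $z=W_La_{L-1}\in\mathbb{R}^C$ and the output is $p=\mathrm{softmax}(z)$. The cross-entropy loss for class label $y$ is $\mathcal{L}=-\log(p_y)$, so $\nabla_z\mathcal{L}=p-e_y$ with $e_y$ the $y$-th standard basis vector, and by the chain rule $\nabla_{W_L}\mathcal{L}=(\nabla_z\mathcal{L})\,a_{L-1}^T$. Quantities at iteration $t$ of gradient ascent (parameters updated by adding a positive multiple of the gradient) are written with argument $(t)$. For vectors $\|\cdot\|$ is the Euclidean norm; for matrices it is the operator norm (largest singular value). *)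

From HB Require Import structures.
From mathcomp Require Import all_boot all_order all_algebra.
From mathcomp Require Import all_classical all_reals all_analysis.
Set Implicit Arguments. Unset Strict Implicit. Unset Printing Implicit Defensive.
Import Order.TTheory GRing.Theory Num.Theory.
Import numFieldNormedType.Exports.
Local Open Scope classical_set_scope.
Local Open Scope ring_scope.

Section MLP.
Variable R : realType.
(* layer widths d_0, d_1, ..., d_L (d_L = number of classes) *)
Variable d : nat -> nat.
Variable sigma : R -> R.

(* Parameters: W_l : R^{d_l x (d_{l-1}+1)}; the extra column is the bias,
   absorbed by appending a constant coordinate 1 to a_{l-1}. Only
   indices 1 <= l <= L are used. *)
Definition params := forall l : nat, 'M[R]_(d l, d l.-1 + 1).

Definition ext n (v : 'cV[R]_n) : 'cV[R]_(n + 1) := col_mx v (const_mx 1).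

Fixpoint act (W : params) (x : 'cV[R]_(d 0)) (l : nat) : 'cV[R]_(d l + 1) :=
  match l with
  | 0 => ext x
  | k.+1 => ext (map_mx sigma (W k.+1 *m act W x k))
  end.

Definition logits (W : params) (x : 'cV[R]_(d 0)) (L : nat) : 'cV[R]_(d L) :=
  W L *m act W x L.-1.

Definition softmax n (z : 'cV[R]_n) : 'cV[R]_n :=
  \col_i (expR (z i 0) / \sum_j expR (z j 0)).

Definition onehot n (y : 'I_n) : 'cV[R]_n := \col_i ((i == y)%:R).

Definition loss (W : params) (x : 'cV[R]_(d 0)) (L : nat) (y : 'I_(d L)) : R :=
  - ln (softmax (logits W x L) y 0).

Definition gradz (W : params) (x : 'cV[R]_(d 0)) (L : nat) (y : 'I_(d L))
  : 'cV[R]_(d L) := softmax (logits W x L) - onehot y.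

Definition gradWL (W : params) (x : 'cV[R]_(d 0)) (L : nat) (y : 'I_(d L))
  : 'M[R]_(d L, d L.-1 + 1) := gradz W x y *m (act W x L.-1)^T.

Definition upd (W : params) (l i j : nat) (s : R) : params :=
  fun l' => W l' + \matrix_(i', j')
    (if [&& l' == l, (i' : nat) == i & (j' : nat) == j] then s else 0).

Definition grad (W : params) (x : 'cV[R]_(d 0)) (L : nat) (y : 'I_(d L))
  (l : nat) : 'M[R]_(d l, d l.-1 + 1) :=
  \matrix_(i, j) derive1 (fun s => loss (upd W l i j s) x y) 0.

End MLP.

Definition vnorm (R : realType) n (v : 'cV[R]_n) : R :=
  Num.sqrt (\sum_i v i 0 ^+ 2).

Definition opnorm (R : realType) m n (A : 'M[R]_(m, n)) : R :=
  sup [set vnorm (A *m v) | v in [set v : 'cV[R]_n | vnorm v = 1]].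

From HB Require Import structures.
From mathcomp Require Import all_boot all_order all_algebra.
From mathcomp Require Import all_classical all_reals all_analysis.
Import Order.TTheory GRing.Theory Num.Theory.
Import numFieldNormedType.Exports.
Local Open Scope classical_set_scope.
Local Open Scope ring_scope.

Set Implicit Arguments.
Unset Strict Implicit.

(* Both parts rest on the operator-norm bound |A v| <= |A| |v|.  It gives
   |z| <= |W_L| |a_{L-1}|, so a bounded a_{L-1} forces |W_L| >= |z| / C1 -> oo.
   Applied to the rank-one gradient (grad_z L) a_{L-1}^T, which maps a_{L-1}
   to |a_{L-1}|^2 grad_z L, it gives |grad_{W_L} L| >= |grad_z L| |a_{L-1}|
   >= c |a_{L-1}|, and an unbounded |a_{L-1}| tends to infinity along a
   subsequence. *)

Section EuclideanNorms.
Variable R : realType.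

Lemma vnorm_ge0 n (v : 'cV[R]_n) : 0 <= vnorm v.
Proof. exact: sqrtr_ge0. Qed.

Lemma vnormZ n k (v : 'cV[R]_n) : vnorm (k *: v) = `|k| * vnorm v.
Proof.
rewrite /vnorm; under eq_bigr do rewrite mxE exprMn.
by rewrite -mulr_sumr sqrtrM ?sqrtr_sqr // sqr_ge0.
Qed.

Lemma vnorm0 n : vnorm (0 : 'cV[R]_n) = 0.
Proof. by rewrite -(scale0r 0) vnormZ normr0 mul0r. Qed.

Lemma vnorm_eq0 n (v : 'cV[R]_n) : vnorm v = 0 -> v = 0.
Proof.
move/eqP; rewrite sqrtr_eq0 => sum_le0.
have sum_eq0 : \sum_i v i 0 ^+ 2 = 0.
  by apply/eqP; rewrite eq_le sum_le0 sumr_ge0 // => i _; exact: sqr_ge0.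
apply/matrixP => i j; rewrite ord1 mxE.
by apply/eqP; rewrite -sqrf_eq0 (psumr_eq0P _ sum_eq0) // => k _; exact: sqr_ge0.
Qed.

Lemma normr_le_vnorm n (v : 'cV[R]_n) i : `|v i 0| <= vnorm v.
Proof.
rewrite /vnorm -sqrtr_sqr ler_sqrt; last by apply: sumr_ge0 => j _; exact: sqr_ge0.
by rewrite (bigD1 i) //= lerDl; apply: sumr_ge0 => j _; exact: sqr_ge0.
Qed.

Lemma vnorm_ext_ge1 n (v : 'cV[R]_n) : 1 <= vnorm (ext v).
Proof.
have := normr_le_vnorm (ext v) (rshift n (0 : 'I_1)).
by rewrite /ext col_mxEd mxE normr1.
Qed.

Lemma trmx_mul_self n (a : 'cV[R]_n) : a^T *m a = (vnorm a ^+ 2)%:M.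
Proof.
apply/matrixP => i j; rewrite !ord1 !mxE /vnorm sqr_sqrtr; last first.
  by apply: sumr_ge0 => k _; exact: sqr_ge0.
by rewrite mulr1n; apply: eq_bigr => k _; rewrite mxE expr2.
Qed.

Lemma opnorm_has_ubound m n (A : 'M[R]_(m, n)) :
  has_ubound [set vnorm (A *m v) | v in [set v : 'cV[R]_n | vnorm v = 1]].
Proof.
exists (Num.sqrt (\sum_i (\sum_j `|A i j|) ^+ 2)) => _ [u /= u1 <-].
rewrite /vnorm ler_sqrt; last by apply: sumr_ge0 => i _; exact: sqr_ge0.
apply: ler_sum => i _; rewrite -[X in X <= _]real_normK ?num_real //.
apply: lerXn2r; rewrite ?nnegrE ?sumr_ge0 //.
rewrite mxE; apply: le_trans (ler_norm_sum _ _ _) _.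
apply: ler_sum => j _.
by rewrite normrM ler_piMr // -u1 normr_le_vnorm.
Qed.

Lemma opnorm_ge0 m n (A : 'M[R]_(m, n)) : 0 <= opnorm A.
Proof.
rewrite /opnorm; set E := [set _ | _ in _].
have [E0|/set0P[r Er]] := eqVneq E set0; first by rewrite E0 sup0.
apply: le_trans (ub_le_sup (opnorm_has_ubound A) Er).
by case: Er => v _ <-; exact: vnorm_ge0.
Qed.

Lemma vnorm_mulmx_le m n (A : 'M[R]_(m, n)) v :
  vnorm (A *m v) <= opnorm A * vnorm v.
Proof.
have [->|v_neq0] := eqVneq v 0.
  by rewrite mulmx0 !vnorm0 mulr0.
have v_gt0 : 0 < vnorm v.
  by rewrite lt_def vnorm_ge0 andbT; apply: contra_neq v_neq0; exact: vnorm_eq0.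
have u1 : vnorm ((vnorm v)^-1 *: v) = 1.
  by rewrite vnormZ ger0_norm ?invr_ge0 ?vnorm_ge0 // mulVf // gt_eqF.
have := ub_le_sup (opnorm_has_ubound A) (ex_intro2 _ _ _ u1 erefl).
rewrite -scalemxAr vnormZ ger0_norm ?invr_ge0 ?vnorm_ge0 // ler_pdivrMl //.
by rewrite mulrC.
Qed.

Lemma opnorm_outer_ge m n (g : 'cV[R]_m) (a : 'cV[R]_n) :
  0 < vnorm a -> vnorm g * vnorm a <= opnorm (g *m a^T).
Proof.
move=> a_gt0; have := vnorm_mulmx_le (g *m a^T) a.
rewrite -mulmxA trmx_mul_self mul_mx_scalar vnormZ ger0_norm ?exprn_ge0 ?vnorm_ge0 //.
by rewrite expr2 -mulrA [leLHS]mulrC ler_pM2r // mulrC.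
Qed.

End EuclideanNorms.

Section MLPNorms.
Variables (R : realType) (d : nat -> nat) (sigma : R -> R).
Variables (W : params R d) (x : 'cV[R]_(d 0)).

Lemma vnorm_act_ge1 l : 1 <= vnorm (act sigma W x l).
Proof. by case: l => [|l]; exact: vnorm_ext_ge1. Qed.

Lemma vnorm_logits_le L :
  vnorm (logits sigma W x L) <= opnorm (W L) * vnorm (act sigma W x L.-1).
Proof. exact: vnorm_mulmx_le. Qed.

Lemma opnorm_gradWL_ge L (y : 'I_(d L)) :
  vnorm (gradz sigma W x y) * vnorm (act sigma W x L.-1)
  <= opnorm (gradWL sigma W x y).
Proof. by apply: opnorm_outer_ge; apply: lt_le_trans (vnorm_act_ge1 _). Qed.

End MLPNorms.

Section Divergence.
Variable R : realType.

Lemma ger_cvgy_pMl {T} {F : set_system T} {FF : Filter F} (M : R) (u v : T -> R) :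
  0 < M -> (\forall t \near F, M * u t <= v t) ->
  u @ F --> +oo -> v @ F --> +oo.
Proof.
move=> M_gt0 Muv /cvgryPge u_cvgy; apply/cvgryPge => A.
near=> t; apply: le_trans (near Muv t _) => //.
by rewrite -ler_pdivrMl //; near: t; exact: u_cvgy.
Unshelve. all: end_near. Qed.

Lemma near_increasing_comp (phi : nat -> nat) (P : nat -> Prop) :
  (forall k, (phi k < phi k.+1)%N) ->
  (\forall t \near \oo, P t) -> \forall k \near \oo, P (phi k).
Proof.
move=> phiS [N _ NP]; have phi_ge k : (k <= phi k)%N.
  by elim: k => // k IHk; exact: leq_ltn_trans IHk (phiS k).
by exists N => // k /= Nk; apply: NP; exact: leq_trans Nk (phi_ge k).
Qed.

Lemma unbounded_subseq_cvgy (u : R^nat) :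
  ~ (exists C, 0 < C /\ \forall t \near \oo, u t <= C) ->
  exists2 phi : nat -> nat, (forall k, (phi k < phi k.+1)%N) &
    (u \o phi) @ \oo --> +oo.
Proof.
move=> u_unbounded.
have next t : {s | (t < s)%N /\ u t + 1 <= u s}.
  apply: cid; apply: contrapT => no_next; apply: u_unbounded.
  exists (`|u t| + 1); split; first by rewrite ltr_wpDl.
  exists t.+1 => // s /= ts; rewrite leNgt; apply/negP => us_gt.
  apply: no_next; exists s; split => //.
  by rewrite ltW // (le_lt_trans _ us_gt) // lerD2r ler_norm.
have [phi [_ phiS]] := dependent_choice next 0%N.
exists phi => [k|]; first exact: (phiS k).1.
have phi_ge k : u (phi 0%N) + k%:R <= u (phi k).
  elim: k => [|k IHk]; first by rewrite addr0.
  by rewrite -natr1 addrA; apply: le_trans _ (phiS k).2; rewrite lerD2r.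
apply: (ger_cvgy_pMl (M := 1) ltr01 (u := fun k => u (phi 0%N) + k%:R)).
  by near=> k; rewrite mul1r phi_ge.
apply/cvgryPge => A; have /cvgryPge/(_ (A - u (phi 0%N))) := @cvgr_idn R.
by apply: filterS => k; rewrite lerBlDl.
Unshelve. all: end_near. Qed.

End Divergence.

Theorem theorem1 (R : realType) (L : nat) (d : nat -> nat) (sigma : R -> R)
  (Csig : R) (x : 'cV[R]_(d 0)) (y : 'I_(d L))
  (W : nat -> params R d) (eta : nat -> R) (c : R) :
  (1 <= L)%N ->
  (forall s : R, derivable sigma s 1) ->
  (forall s : R, `|derive1 sigma s| <= Csig) ->
  (forall t, 0 < eta t) ->
  (forall t l, (1 <= l <= L)%N ->
     W t.+1 l = W t l + eta t *: grad sigma (W t) x y l) ->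
  0 < c ->
  (\forall t \near \oo, c <= vnorm (gradz sigma (W t) x y)) ->
  (fun t => vnorm (logits sigma (W t) x L)) @ \oo --> +oo ->
  ((exists C1 : R, 0 < C1 /\
      \forall t \near \oo, vnorm (act sigma (W t) x L.-1) <= C1) ->
     (fun t => opnorm (W t L)) @ \oo --> +oo)
  /\
  (~ (exists C1 : R, 0 < C1 /\
      \forall t \near \oo, vnorm (act sigma (W t) x L.-1) <= C1) ->
     exists phi : nat -> nat, {homo phi : m n / (m < n)%N} /\
       (fun k => opnorm (gradWL sigma (W (phi k)) x y)) @ \oo --> +oo).
Proof.
move=> _ _ _ _ _ c_gt0 gradz_ge logits_cvgy; split.
- case=> C1 [C1_gt0 act_le].
  have C1V_gt0 : 0 < C1^-1 by rewrite invr_gt0.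
  apply: ger_cvgy_pMl C1V_gt0 _ logits_cvgy.
  near=> t; rewrite ler_pdivrMl // mulrC.
  apply: le_trans (vnorm_logits_le _ _ _ _) _.
  apply: ler_wpM2l; first exact: opnorm_ge0.
  by near: t.
- case/unbounded_subseq_cvgy => phi phiS act_phi_cvgy.
  exists phi; split; first exact: homo_ltn ltn_trans phiS.
  apply: ger_cvgy_pMl c_gt0 _ act_phi_cvgy.
  have gradz_phi_ge := near_increasing_comp phiS gradz_ge.
  near=> k; apply: le_trans (opnorm_gradWL_ge _ _ _ _).
  apply: ler_wpM2r; first exact: vnorm_ge0.
  by near: k; exact: gradz_phi_ge.
Unshelve. all: end_near. Qed.
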